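(* Let $\oplus$ be a combinator. Then $\oplus$ satisfies ($\oplus$PAR): for every pair $\langle\preceq_1,\preceq_2\rangle$ in its domain and all $x,y \in W$, if $x \prec_{1\oplus 2} y$ then for each $i \in \{1,2\}$ there exists $z$ with $x \sim_{1\oplus 2} z$ and $z \prec_i y$; if and only if it satisfies ($\oplus$SB): for every pair in its domain and every $S \subseteq W$, if $x \prec_{1\oplus 2} y$ for every $x \in S^c$ and $y \in S$, then $\min(\preceq_1, S) \cup \min(\preceq_2, S) \subseteq \min(\preceq_{1\oplus 2}, S)$.
   Context: $W$ is a finite nonempty set (of possible worlds); $S^c$ is the complement of $S$ in $W$. A tpo is a total preorder on $W$; $\prec$, $\sim$ its strict and symmetric parts. For $S \subseteq W$, $\min(\preceq, S) = \{x \in S : x \preceq y\ \forall y \in S\}$. A combinator $\oplus$ maps pairs of tpos $\langle\preceq_1,\preceq_2\rangle$ in its domain to a tpo $\preceq_{1\oplus 2}$, with strict part $\prec_{1\oplus 2}$ and symmetric part $\sim_{1\oplus 2}$. *)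

From mathcomp Require Import all_boot.
Set Implicit Arguments. Unset Strict Implicit. Unset Printing Implicit Defensive.

Section Defs.
Variable W : finType.

Definition tpo (le : rel W) : Prop := total le /\ transitive le.

Definition strict (le : rel W) : rel W := fun x y => le x y && ~~ le y x.
Definition symm (le : rel W) : rel W := fun x y => le x y && le y x.

Definition minset (le : rel W) (S : {set W}) : {set W} :=
  [set x in S | [forall y in S, le x y]].

Record combinator := Combinator {
  cdom : rel W -> rel W -> Prop;
  cop : rel W -> rel W -> rel W;
  cdom_tpo : forall l1 l2, cdom l1 l2 -> tpo l1 /\ tpo l2;
  cop_tpo : forall l1 l2, cdom l1 l2 -> tpo (cop l1 l2)
}.

Definition PAR (c : combinator) : Prop :=
  forall l1 l2, cdom c l1 l2 ->
  forall x y : W, strict (cop c l1 l2) x y ->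
    (exists z, symm (cop c l1 l2) x z && strict l1 z y) /\
    (exists z, symm (cop c l1 l2) x z && strict l2 z y).

Definition SB (c : combinator) : Prop :=
  forall l1 l2, cdom c l1 l2 ->
  forall S : {set W},
    (forall x y, x \in ~: S -> y \in S -> strict (cop c l1 l2) x y) ->
    minset l1 S :|: minset l2 S \subset minset (cop c l1 l2) S.

End Defs.

(* (PAR) => (SB): if [x] is [l_i]-minimal in a final segment [S] of the
   combined order and [y] in [S] were strictly below [x], the witness [z]
   combined-equivalent to [y] with [z <_i x] could neither lie in [S] (by
   minimality of [x]) nor outside it (it would then be strictly below [y]).
   For (SB) => (PAR): if [x < y], apply (SB) to the final segment of [x]; an
   [l_i]-minimal [z] there is combined-minimal, hence equivalent to [x], and
   [z <_i y] since otherwise [y] would be [l_i]-minimal too, hence not above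
   [x]. *)
From mathcomp Require Import all_boot.

Set Implicit Arguments.
Unset Strict Implicit.
Unset Printing Implicit Defensive.

Section Minset.
Variables (W : finType) (le : rel W).
Hypothesis le_tpo : tpo le.

Lemma tpo_refl : reflexive le.
Proof. by move=> x; have [tot _] := le_tpo; case/orP: (tot x x). Qed.

Lemma tpo_strictE x y : strict le x y = ~~ le y x.
Proof.
have [tot _] := le_tpo; rewrite /strict.
by case lexy: (le x y) => //=; have := tot x y; rewrite lexy /= => ->.
Qed.

Lemma minsetP (S : {set W}) x :
  reflect (x \in S /\ forall y, y \in S -> le x y) (x \in minset le S).
Proof. by rewrite inE; apply: (iffP andP) => -[xS /forall_inP]. Qed.

Lemma minset_le_closed (S : {set W}) x y :
  x \in minset le S -> y \in S -> le y x -> y \in minset le S.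
Proof.
have [_ tr] := le_tpo.
by move=> /minsetP[_ xmin] yS yx; apply/minsetP; split=> // w /xmin; apply: tr.
Qed.

(* A maximiser of the number of elements of [S] above it is [le]-minimal:
   otherwise some [w] strictly below it has strictly more. *)
Lemma minset_nonempty (S : {set W}) x : x \in S -> exists z, z \in minset le S.
Proof.
have [_ tr] := le_tpo.
move=> xS; pose above z := [set u in S | le z u].
have [z zS zmax] := arg_maxnP (fun z => #|above z|) xS.
exists z; apply/minsetP; split=> // w wS; apply: contraT; rewrite -tpo_strictE.
move=> /andP[lewz nlezw].
suff: #|above z| < #|above w| by rewrite ltnNge => /negP[]; apply: zmax.
apply/proper_card/properP; split.
  by apply/subsetP => u; rewrite !inE => /andP[-> /(tr _ _ _ lewz)].
by exists w; rewrite !inE wS ?tpo_refl // nlezw.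
Qed.

End Minset.

Section CoordinateCondition.
Variables (W : finType) (le l : rel W).
Hypotheses (le_tpo : tpo le) (l_tpo : tpo l).

Definition strict_witnessed :=
  forall x y, strict le x y -> exists z, symm le x z && strict l z y.

Definition strict_separates (S : {set W}) :=
  forall x y, x \in ~: S -> y \in S -> strict le x y.

Lemma strict_witnessed_minset_subset S :
  strict_witnessed -> strict_separates S -> minset l S \subset minset le S.
Proof.
move=> wit sep; apply/subsetP => x xmin; have /minsetP[xS xlmin] := xmin.
apply/minsetP; split=> // y yS; apply: contraT; rewrite -tpo_strictE //.
move=> /wit[z /andP[/andP[leyz _] strict_zx]].
case: (boolP (z \in S)) => [zS | zNS].
  by move: strict_zx; rewrite tpo_strictE // xlmin.
have := sep z y; rewrite inE zNS tpo_strictE // leyz.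
by move/(_ isT yS).
Qed.

Lemma upset_separates x : strict_separates [set w | le x w].
Proof.
have [tot tr] := le_tpo.
move=> u v; rewrite !inE => nlexu lexv; rewrite tpo_strictE //.
by apply: contra nlexu; apply: tr.
Qed.

Lemma minset_subset_strict_witnessed :
  (forall S, strict_separates S -> minset l S \subset minset le S) ->
  strict_witnessed.
Proof.
move=> sub x y strict_xy; pose S := [set w | le x w].
have xS : x \in S by rewrite inE tpo_refl.
have yS : y \in S by rewrite inE; case/andP: strict_xy.
have subS := subsetP (sub S (@upset_separates x)).
have [z zlmin] := minset_nonempty l_tpo xS.
have /minsetP[lexz _] := zlmin; rewrite inE in lexz.
have /minsetP[_ zle] := subS _ zlmin.
exists z; rewrite /symm lexz zle //=.
rewrite tpo_strictE //; apply/negP => lyz.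
have /minsetP[_ yle] := subS _ (minset_le_closed l_tpo zlmin yS lyz).
by move: strict_xy; rewrite tpo_strictE // yle.
Qed.

End CoordinateCondition.

Theorem proposition9 (W : finType) (HW : 0 < #|W|) (c : combinator W) :
  PAR c <-> SB c.
Proof.
split=> [par | sb] l1 l2 dom; have [t1 t2] := cdom_tpo dom; have t := cop_tpo dom.
  move=> S sep; rewrite subUset.
  by rewrite !strict_witnessed_minset_subset // => x y /(par l1 l2 dom)[].
split; apply: minset_subset_strict_witnessed => // S sep;
  apply: subset_trans (sb _ _ dom S sep); [exact: subsetUl | exact: subsetUr].
Qed.
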